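(* The functor $\epsilon:\mathcal{T}_q\to\mathcal{E}^f$ is full: for any two finite-dimensional non-degenerate quadratic spaces $V,W$ over $\mathbb{F}_2$ and any linear map $f:V\to W$ of underlying vector spaces, there exists a morphism $T\in\mathrm{Hom}_{\mathcal{T}_q}(V,W)$ of the form $T=[V\xrightarrow{\varphi}W\perp Y\hookleftarrow W]$ with $\epsilon(T)=f$.
   Context: All vector spaces are over $\mathbb{F}_2$; $\mathcal{E}^f$ is the category of finite-dimensional vector spaces. A quadratic form on $V$ is $q:V\to\mathbb{F}_2$ with $B(x,y)=q(x+y)+q(x)+q(y)$ bilinear; non-degenerate means $B$ has trivial radical. $\mathcal{E}_q$: objects non-degenerate finite-dimensional quadratic spaces, morphisms linear maps preserving $q$. Pseudo push-out of $f:V\to W=f(V)\perp V'$ and $g:V\to X=g(V)\perp V''$: the space $V\perp V'\perp V''$ with maps $f(v)+v'\mapsto v+v'$ and $g(v)+v''\mapsto v+v''$. $\mathcal{T}_q$: same objects as $\mathcal{E}_q$; morphisms $V\to W$ are classes of diagrams $[V\xrightarrow{f}X\xleftarrow{g}W]$ in $\mathcal{E}_q$ modulo the equivalence relation generated by existence of an $\mathcal{E}_q$-morphism $X_1\to X_2$ compatible with both legs; composition uses the pseudo push-out. $\epsilon:\mathcal{T}_q\to\mathcal{E}^f$ is the identity on underlying spaces and sends $[V\xrightarrow{f}X\xleftarrow{g}W]$ to $p_g\circ f$, where $p_g:X=g(W)\perp g(W)^\perp\to W$ is orthogonal projection onto $g(W)$ followed by $g^{-1}$. *)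

From HB Require Import structures.
From mathcomp Require Import all_boot all_order all_algebra.
Set Implicit Arguments. Unset Strict Implicit. Unset Printing Implicit Defensive.
Import GRing.Theory.
Local Open Scope ring_scope.

Definition polar (n : nat) (q : 'rV['F_2]_n -> 'F_2) (x y : 'rV['F_2]_n) : 'F_2 :=
  q (x + y) + q x + q y.

Definition is_quad_form (n : nat) (q : 'rV['F_2]_n -> 'F_2) : Prop :=
  (forall (a : 'F_2) x x' y, polar q (a *: x + x') y = a * polar q x y + polar q x' y) /\
  (forall (a : 'F_2) x y y', polar q x (a *: y + y') = a * polar q x y + polar q x y').

Definition is_nondeg (n : nat) (q : 'rV['F_2]_n -> 'F_2) : Prop :=
  forall x, (forall y, polar q x y = 0) -> x = 0.

Definition orth_sum (m k : nat) (qW : 'rV['F_2]_m -> 'F_2) (qY : 'rV['F_2]_k -> 'F_2)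
  (x : 'rV['F_2]_(m + k)) : 'F_2 := qW (lsubmx x) + qY (rsubmx x).

Definition incl_l (m k : nat) (w : 'rV['F_2]_m) : 'rV['F_2]_(m + k) := row_mx w 0.

(* proj_spec qX g x w : w = p_g(x), i.e. x - g(w) is orthogonal to g(W)
   (orthogonal projection onto g(W) followed by g^{-1}). *)
Definition proj_spec (nX nW : nat) (qX : 'rV['F_2]_nX -> 'F_2)
  (g : 'rV['F_2]_nW -> 'rV['F_2]_nX) (x : 'rV['F_2]_nX) (w : 'rV['F_2]_nW) : Prop :=
  forall w', polar qX (x - g w) (g w') = 0.

(** The extra summand Y is a "twisted hyperbolic" space: on Y = V ⊕ V put
    q_Y(a, b) = h(a) + a·b with h(v) = q_V(v) + q_W(f v).  The dot-product term
    pairs the two copies of V perfectly, so q_Y is non-degenerate whatever h is.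
    Then φ(v) = (f v, (v, 0)) satisfies q_W(f v) + q_Y(v, 0) = q_V(v) in
    characteristic 2, and φ(v) - ι(f v) lies in Y, orthogonal to ι(W); hence the
    projection of φ(v) onto W is f v. *)
From HB Require Import structures.
From mathcomp Require Import all_boot all_order all_algebra.
From mathcomp Require Import ring.
Set Implicit Arguments. Unset Strict Implicit. Unset Printing Implicit Defensive.
Import GRing.Theory.
Local Open Scope ring_scope.

Lemma pchar_F2 : 2%N \in [pchar 'F_2].
Proof. exact: pchar_Fp. Qed.

(* In characteristic 2 the polar form is q(x+y) - q x - q y, so identities
   about it become characteristic-free ring identities. *)
Lemma polarE n (q : 'rV['F_2]_n -> 'F_2) x y : polar q x y = q (x + y) - q x - q y.
Proof. by rewrite /polar !(GRing.subr_pchar2 pchar_F2). Qed.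

Lemma polarD n (q1 q2 : 'rV['F_2]_n -> 'F_2) x y :
  polar (fun z => q1 z + q2 z) x y = polar q1 x y + polar q2 x y.
Proof. rewrite !polarE; ring. Qed.

Lemma polar_comp n m (q : 'rV['F_2]_m -> 'F_2) (g : {linear 'rV['F_2]_n -> 'rV['F_2]_m}) x y :
  polar (q \o g) x y = polar q (g x) (g y).
Proof. by rewrite /polar /= linearD. Qed.

Lemma polar0r n (q : 'rV['F_2]_n -> 'F_2) x : q 0 = 0 -> polar q x 0 = 0.
Proof. by move=> q0; rewrite /polar addr0 q0 addr0 (addrr_pchar2 pchar_F2). Qed.

Lemma polar0l n (q : 'rV['F_2]_n -> 'F_2) y : q 0 = 0 -> polar q 0 y = 0.
Proof. by move=> q0; rewrite /polar add0r q0 addr0 (addrr_pchar2 pchar_F2). Qed.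

Lemma quad_form0 n (q : 'rV['F_2]_n -> 'F_2) : is_quad_form q -> q 0 = 0.
Proof.
case=> linl _; have := linl 1 0 0 0; rewrite scaler0 add0r mul1r.
move/(congr1 (fun t => t - polar q 0 0)); rewrite subrr addrK.
by rewrite /polar addr0 (addrr_pchar2 pchar_F2) add0r => /esym.
Qed.

Lemma quad_formD n (q1 q2 : 'rV['F_2]_n -> 'F_2) :
  is_quad_form q1 -> is_quad_form q2 -> is_quad_form (fun z => q1 z + q2 z).
Proof.
case=> [l1 r1] [l2 r2]; split=> a x x' y; rewrite !polarD ?l1 ?l2 ?r1 ?r2; ring.
Qed.

Lemma quad_form_comp n m (q : 'rV['F_2]_m -> 'F_2) (g : {linear 'rV['F_2]_n -> 'rV['F_2]_m}) :
  is_quad_form q -> is_quad_form (q \o g).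
Proof. by case=> l r; split=> a x x' y; rewrite !polar_comp !linearP. Qed.

Definition dot n (a b : 'rV['F_2]_n) : 'F_2 := \sum_i a 0 i * b 0 i.

Lemma dotC n (a b : 'rV['F_2]_n) : dot a b = dot b a.
Proof. by apply: eq_bigr => i _; rewrite mulrC. Qed.

Lemma dotPl n (c : 'F_2) (x x' y : 'rV['F_2]_n) :
  dot (c *: x + x') y = c * dot x y + dot x' y.
Proof. rewrite /dot mulr_sumr -big_split; apply: eq_bigr => j _; rewrite !mxE /=; ring. Qed.

Lemma dotPr n (c : 'F_2) (x y y' : 'rV['F_2]_n) :
  dot x (c *: y + y') = c * dot x y + dot x y'.
Proof. by rewrite ![dot x _]dotC dotPl. Qed.

Lemma dotDl n (x x' y : 'rV['F_2]_n) : dot (x + x') y = dot x y + dot x' y.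
Proof. by have := dotPl 1 x x' y; rewrite scale1r mul1r. Qed.

Lemma dotDr n (x y y' : 'rV['F_2]_n) : dot x (y + y') = dot x y + dot x y'.
Proof. by have := dotPr 1 x y y'; rewrite scale1r mul1r. Qed.

Lemma dot0l n (y : 'rV['F_2]_n) : dot 0 y = 0.
Proof. by rewrite /dot big1 // => i _; rewrite mxE mul0r. Qed.

Lemma dot0r n (x : 'rV['F_2]_n) : dot x 0 = 0.
Proof. by rewrite dotC dot0l. Qed.

Lemma dot_delta n (a : 'rV['F_2]_n) i : dot a (delta_mx 0 i) = a 0 i.
Proof.
rewrite /dot (bigD1 i) //= big1 ?addr0 => [|j ji]; rewrite mxE ?eqxx ?mulr1 //.
by rewrite (negbTE ji) andbF mulr0.
Qed.

Section HypTwist.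

Variables (n : nat) (h : 'rV['F_2]_n -> 'F_2).
Hypothesis h_quad : is_quad_form h.

Definition hyp_twist (x : 'rV['F_2]_(n + n)) : 'F_2 :=
  h (lsubmx x) + dot (lsubmx x) (rsubmx x).

Lemma polar_hyp_twist x y : polar hyp_twist x y =
  polar h (lsubmx x) (lsubmx y) + dot (lsubmx x) (rsubmx y) + dot (lsubmx y) (rsubmx x).
Proof.
rewrite polarD (polar_comp h (@lsubmx _ 1 n n)) [polar (fun _ => dot _ _) _ _]polarE.
by rewrite /= !linearD /= !dotDl !dotDr; ring.
Qed.

Lemma hyp_twist_quad : is_quad_form hyp_twist.
Proof.
case: h_quad => l r.
by split=> a x x' y; rewrite !polar_hyp_twist !linearP /= ?l ?r ?dotPl ?dotPr; ring.
Qed.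

Lemma hyp_twist_nondeg : is_nondeg hyp_twist.
Proof.
have h0 := quad_form0 h_quad.
move=> x radx; have xl0 : lsubmx x = 0.
  apply/rowP=> i; have := radx (row_mx 0 (delta_mx 0 i)).
  rewrite polar_hyp_twist row_mxKl row_mxKr polar0r // dot_delta dot0l.
  by rewrite !addr0 add0r => ->; rewrite mxE.
have xr0 : rsubmx x = 0.
  apply/rowP=> i; have := radx (row_mx (delta_mx 0 i) 0).
  rewrite polar_hyp_twist row_mxKl row_mxKr xl0 polar0l // dot0l dotC dot_delta.
  by rewrite !add0r => ->; rewrite mxE.
by rewrite -[x]hsubmxK xl0 xr0 row_mx0.
Qed.

End HypTwist.

Lemma orth_sum_incl_orth m k (qW : 'rV['F_2]_m -> 'F_2) (qY : 'rV['F_2]_k -> 'F_2) w y :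
  qW 0 = 0 -> qY 0 = 0 -> polar (orth_sum qW qY) (row_mx 0 y) (@incl_l m k w) = 0.
Proof.
move=> qW0 qY0; rewrite polarE /orth_sum /incl_l add_row_mx add0r addr0 !row_mxKl !row_mxKr.
rewrite qW0 qY0 add0r; ring.
Qed.

Theorem mainTheorem2 (n m : nat)
  (qV : 'rV['F_2]_n -> 'F_2) (qW : 'rV['F_2]_m -> 'F_2) :
  is_quad_form qV -> is_nondeg qV ->
  is_quad_form qW -> is_nondeg qW ->
  forall f : {linear 'rV['F_2]_n -> 'rV['F_2]_m},
  exists (k : nat) (qY : 'rV['F_2]_k -> 'F_2)
         (phi : {linear 'rV['F_2]_n -> 'rV['F_2]_(m + k)}),
    [/\ is_quad_form qY, is_nondeg qY,
        (forall v, orth_sum qW qY (phi v) = qV v) &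
        (forall v, proj_spec (orth_sum qW qY) (@incl_l m k) (phi v) (f v))].
Proof.
move=> qV_quad _ qW_quad _ f.
pose h (v : 'rV['F_2]_n) : 'F_2 := qV v + (qW \o f) v.
have h_quad : is_quad_form h by apply: quad_formD => //; apply: quad_form_comp.
pose M := row_mx (lin1_mx f) (row_mx (1%:M : 'M['F_2]_n) (0 : 'M_n)).
have phiE v : v *m M = row_mx (f v) (row_mx v 0).
  by rewrite !mul_mx_row mul_rV_lin1 mulmx1 mulmx0.
exists (n + n)%N, (hyp_twist h), (mulmxr M); split.
- exact: hyp_twist_quad.
- exact: hyp_twist_nondeg.
- move=> v; rewrite /= phiE /orth_sum /hyp_twist /h /= !(row_mxKl, row_mxKr) dot0r addr0.
  by rewrite addrCA (addrr_pchar2 pchar_F2) addr0.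
- move=> v w; rewrite /= phiE /incl_l opp_row_mx add_row_mx subrr oppr0 addr0.
  exact: orth_sum_incl_orth (quad_form0 qW_quad) (quad_form0 (hyp_twist_quad h_quad)).
Qed.
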